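(* Let $0<\alpha<1$ and $p,q>0$. If $G_{\alpha,p}(A,B)\le_\lambda\mathcal{A}_{\alpha,q}(A,B)$ holds for all positive definite $2\times2$ matrices $A,B$, then $p\le q$.
   Context: For positive definite $A,B$: $A\#_\alpha B:=A^{1/2}(A^{-1/2}BA^{-1/2})^\alpha A^{1/2}$, $G_{\alpha,p}(A,B):=(A^p\#_\alpha B^p)^{1/p}$, $\mathcal{A}_{\alpha,q}(A,B):=((1-\alpha)A^q+\alpha B^q)^{1/q}$. For positive semidefinite $n\times n$ matrices $X,Y$ with eigenvalues listed in decreasing order with multiplicities $\lambda_1(\cdot)\ge\dots\ge\lambda_n(\cdot)$, $X\le_\lambda Y$ means $\lambda_i(X)\le\lambda_i(Y)$ for all $i$. *)

From mathcomp Require Import all_boot all_order all_algebra.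
From mathcomp Require Import sesquilinear spectral complex.
From mathcomp Require Import reals exp.

Set Implicit Arguments.
Unset Strict Implicit.
Unset Printing Implicit Defensive.

Import Order.TTheory GRing.Theory Num.Theory.
Local Open Scope ring_scope.
Local Open Scope sesquilinear_scope.

Section MatrixMeans.
Variable R : realType.
Local Notation C := R[i].

Definition posdef n (A : 'M[C]_n) : Prop :=
  A \is hermsymmx /\
  forall v : 'rV[C]_n, v != 0 -> 0 < (v *m A *m v ^t*) 0 0.

(* Real power A^t of a positive definite matrix, via the spectral
   decomposition A = P^-1 diag(d) P (P unitary) of the library:
   A^t := P^-1 diag(d_i^t) P.  (d_i are real and > 0 for A posdef.) *)
Definition mpow n (A : 'M[C]_n) (t : R) : 'M[C]_n :=
  invmx (spectralmx A) *m
  diag_mx (map_mx (fun z : C => ((complex.Re z) `^ t)%:C%C) (spectral_diag A)) *m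
  spectralmx A.

Definition wgmean n (alpha : R) (A B : 'M[C]_n) : 'M[C]_n :=
  mpow A (2^-1) *m
  mpow (mpow A (- 2^-1) *m B *m mpow A (- 2^-1)) alpha *m
  mpow A (2^-1).

Definition Gmean n (alpha p : R) (A B : 'M[C]_n) : 'M[C]_n :=
  mpow (wgmean alpha (mpow A p) (mpow B p)) p^-1.

Definition Amean n (alpha q : R) (A B : 'M[C]_n) : 'M[C]_n :=
  mpow (((1 - alpha)%:C)%C *: mpow A q + (alpha%:C)%C *: mpow B q) q^-1.

Definition eigvals_dec n (X : 'M[C]_n) (s : seq R) : Prop :=
  size s = n /\ sorted >=%R s /\
  char_poly X = \prod_(x <- s) ('X - ((x%:C)%C)%:P).

Definition lambda_le n (X Y : 'M[C]_n) : Prop :=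
  exists sX sY : seq R, eigvals_dec X sX /\ eigvals_dec Y sY /\
    forall i : nat, (i < n)%N -> nth 0 sX i <= nth 0 sY i.

End MatrixMeans.

(* Suppose q < p and put r = q / p.  Test the inequality on A = diag(1, a)
   and B = Q + a (1 - Q), with Q a rank-one projection and a = δ^(1/p), so
   that A^p and B^p are the pencils P + δ (1 - P) and Q + δ (1 - Q).  Tilting
   Q by an angle of order sqrt δ makes A^(-p/2) B^p A^(-p/2) have eigenvalues
   4 and 1/4; then A^p #_α B^p has determinant δ and trace κ (1 + δ) with
   κ < 1, so the smallest eigenvalue of G_{α,p}(A, B) is at least
   (δ / κ (1 + δ))^(1/p).  The smallest eigenvalue of (1 - α) A^q + α B^q is
   at most its corner entry δ^r + O(δ), so that of A_{α,q}(A, B) is at most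
   (δ^r + O(δ))^(1/q).  Raised to the power q, the lower bound becomes
   δ^r (κ (1 + δ))^(-r), which beats δ^r + O(δ) for small δ because r < 1. *)

From mathcomp Require Import all_boot all_order all_algebra.
From mathcomp Require Import sesquilinear spectral complex.
From mathcomp Require Import reals exp.
From mathcomp Require Import ring lra.

Set Implicit Arguments.
Unset Strict Implicit.
Unset Printing Implicit Defensive.

Import Order.TTheory GRing.Theory Num.Theory.
Local Open Scope ring_scope.
Local Open Scope sesquilinear_scope.

Section RealFacts.
Variable R : realType.

Lemma exists_affine_interp (f : R -> R) (x y : R) :
  exists c0 c1, c0 + c1 * x = f x /\ c0 + c1 * y = f y.
Proof.
have [->|xy] := eqVneq x y; first by exists (f y), 0; rewrite mul0r addr0.
have xy0 : x - y != 0 by rewrite subr_eq0.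
exists (f x - (f x - f y) / (x - y) * x), ((f x - f y) / (x - y)).
by split; field.
Qed.

Lemma sorted_sum_prod_eq (s0 s1 x y : R) :
  s1 <= s0 -> s0 + s1 = x + y -> s0 * s1 = x * y ->
  s0 = Num.max x y /\ s1 = Num.min x y.
Proof.
move=> s10 sum prod; have s0E : s0 = x + y - s1 by lra.
have : (s1 - x) * (s1 - y) = 0.
  have -> : (s1 - x) * (s1 - y) = x * y - s0 * s1 by rewrite s0E; ring.
  by rewrite prod subrr.
move/eqP; rewrite mulf_eq0 !subr_eq0 maxEle minEle.
by case/orP => /eqP s1E; case: leP => xy; split; lra.
Qed.

Lemma min_powR (x y t : R) : 0 <= x -> 0 <= y -> 0 <= t ->
  Num.min (x `^ t) (y `^ t) = Num.min x y `^ t.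
Proof.
move=> x_ge0 y_ge0 t_ge0; case: (leP x y) => [xy | /ltW yx];
  [apply/min_idPl | apply/min_idPr]; by rewrite ge0_ler_powR ?nnegrE.
Qed.

Lemma prod_div_sum_le_min (x y : R) :
  0 < x -> 0 < y -> x * y / (x + y) <= Num.min x y.
Proof.
move=> x_gt0 y_gt0; rewrite ler_pdivrMr ?addr_gt0 //.
by case: (leP x y) => xy; nra.
Qed.

Lemma exists_small_powR (r e d : R) : r < 1 -> 0 < e -> 0 < d ->
  exists δ, [/\ 0 < δ, δ <= d & δ < e * δ `^ r].
Proof.
move=> r_lt1 e_gt0 d_gt0; set δ := Num.min d ((e / 2) `^ (1 - r)^-1).
have δ_gt0 : 0 < δ by rewrite lt_min d_gt0 powR_gt0 ?divr_gt0.
exists δ; split => //; first by rewrite ge_min lexx.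
have r1_gt0 : 0 < 1 - r by rewrite subr_gt0.
have δ_pow : δ `^ (1 - r) <= e / 2.
  have δ_le_root : δ <= (e / 2) `^ (1 - r)^-1 by rewrite ge_min lexx orbT.
  have δ_nneg : δ \in Num.nneg by rewrite nnegrE ltW.
  have := ge0_ler_powR (ltW r1_gt0) δ_nneg (powR_ge0 _ _) δ_le_root.
  by rewrite -powRrM mulVf ?lt0r_neq0 // powRr1 // divr_ge0 // ltW.
have δ_split : δ = δ `^ r * δ `^ (1 - r).
  by rewrite -powRD ?(lt0r_neq0 δ_gt0) ?implybT // addrC subrK powRr1 // ltW.
rewrite {1}δ_split [e * _]mulrC ltr_pM2l ?powR_gt0 //.
apply: le_lt_trans δ_pow _; lra.
Qed.

(* The chord of t ^ al through 1/4 and 4, evaluated at 1; strict concavity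
   of t ^ al makes it smaller than 1. *)
Definition kappa (al : R) := (4 `^ al + 4 * 4^-1 `^ al) / 5.

Lemma kappa_gt0 al : 0 < kappa al.
Proof. by rewrite divr_gt0 ?addr_gt0 ?mulr_gt0 ?powR_gt0 ?invr_gt0 ?ltr0n. Qed.

Lemma kappa_lt1 al : 0 < al < 1 -> kappa al < 1.
Proof.
move=> /andP[al_gt0 al_lt1]; set t := 4 `^ al.
have ln4_gt0 : 0 < ln (4 : R) by rewrite ln_gt0 // ltr1n.
have t_pos : t \in Num.pos by rewrite posrE powR_gt0 ?ltr0n.
have ln_t : ln t = al * ln 4 by rewrite ln_powR.
have t_gt1 : 1 < t by rewrite -ltr_ln ?posrE ?ltr01 // ln1 ln_t mulr_gt0.
have t_lt4 : t < 4 by rewrite -ltr_ln ?posrE ?ltr0n // ln_t gtr_pMl.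
have t_inv : 4^-1 `^ al = t^-1 by rewrite -powR_inv1 ?ler0n // -powRrM mulN1r powRN.
have : (t - 1) * (t - 4) / t < 0 by rewrite pmulr_llt0 ?invr_gt0; nra.
have -> : (t - 1) * (t - 4) / t = 5 * kappa al - 5.
  by rewrite /kappa t_inv -/t; field; rewrite lt0r_neq0 // (lt_trans ltr01 t_gt1).
lra.
Qed.

Lemma exists_separating_delta (p q κ : R) : 0 < q -> q < p -> 0 < κ -> κ < 1 ->
  exists δ, [/\ 0 < δ < 1, 0 <= 9 / 4 * δ / (1 - δ) ^+ 2 <= 1 &
    (δ `^ (q / p) + 9 / 4 * δ / (1 - δ) ^+ 2) `^ q^-1 < (δ / (κ * (1 + δ))) `^ p^-1].
Proof.
move=> q_gt0 q_lt_p κ_gt0 κ_lt1; have p_gt0 := lt_trans q_gt0 q_lt_p.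
set r := q / p; have r_gt0 : 0 < r by rewrite divr_gt0.
have r_lt1 : r < 1 by rewrite ltr_pdivrMr // mul1r.
set c := (1 + κ) / 2; have c_gt0 : 0 < c by rewrite /c; lra.
set γ := c `^ r; have γ_gt0 : 0 < γ by rewrite powR_gt0.
have γ_lt1 : γ < 1.
  have := @gt0_ltr_powR _ _ r_gt0 c 1; rewrite powR1 !nnegrE ltW ?ler01 //.
  by apply; rewrite /c; lra.
set e := (γ^-1 - 1) / 3; have e_gt0 : 0 < e by rewrite divr_gt0 // subr_gt0 invf_gt1.
have d_gt0 : 0 < Num.min (1 / 10) ((1 - κ) / 2).
  by rewrite lt_min; apply/andP; split; lra.
have [δ [δ_gt0 δ_le δ_lt]] := exists_small_powR r_lt1 e_gt0 d_gt0.
move: δ_le; rewrite le_min => /andP[δ_small δ_κ].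
exists δ; set s := 9 / 4 * δ / (1 - δ) ^+ 2.
have sq_gt0 : 3 / 4 < (1 - δ) ^+ 2 by nra.
have s_ge0 : 0 <= s by rewrite divr_ge0 ?sqr_ge0 //; lra.
have s_le : s <= 3 * δ by rewrite ler_pdivrMr; nra.
split; [by rewrite δ_gt0 /=; lra | by rewrite s_ge0 /=; lra |].
set τ := κ * (1 + δ); have τ_gt0 : 0 < τ by rewrite mulr_gt0 //; lra.
have τr_le : τ `^ r <= γ.
  by rewrite ge0_ler_powR ?nnegrE ?(ltW r_gt0) ?ltW //; rewrite /τ /c; nra.
(* δ ^ r + s <= δ ^ r + 3 δ < δ ^ r / γ <= (δ / τ) ^ r *)
have gap : δ `^ r + s < (δ / τ) `^ r.
  have δr_gt0 : 0 < δ `^ r by rewrite powR_gt0.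
  rewrite powRM ?invr_ge0 ?ltW // -powR_inv1 ?(ltW τ_gt0) // -powRrM mulN1r powRN.
  have : δ `^ r + 3 * δ < δ `^ r / γ by move: δ_lt; rewrite /e; lra.
  have : δ `^ r / γ <= δ `^ r / τ `^ r by rewrite ler_pM2l // lef_pV2 ?posrE ?powR_gt0.
  lra.
have rq : r * q^-1 = p^-1 by rewrite /r mulrAC mulfV ?mul1r // lt0r_neq0.
have sum_nneg : δ `^ r + s \in Num.nneg by rewrite nnegrE addr_ge0 ?powR_ge0.
have q_inv_gt0 : 0 < q^-1 by rewrite invr_gt0.
have := gt0_ltr_powR q_inv_gt0 sum_nneg (powR_ge0 _ _) gap.
by rewrite -powRrM rq.
Qed.

End RealFacts.

Section TwoByTwo.
Variable R : realType.
Local Notation C := R[i].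
Local Notation "x %:C" := (real_complex R x).

Lemma mpow_affine n (H : 'M[C]_n) (x y c0 c1 t : R) :
  H \is hermsymmx -> (H - x%:C%:M) *m (H - y%:C%:M) = 0 ->
  c0 + c1 * x = x `^ t -> c0 + c1 * y = y `^ t ->
  mpow H t = c0%:C%:M + c1%:C *: H.
Proof.
move=> /hermitian_normalmx/orthomx_spectralP HE HCH ex ey.
rewrite /mpow; move: HE (spectral_unit H).
move: (spectralmx H) (spectral_diag H) => P d HE Pu.
(* H is diagonal in the spectral basis, with entries x or y, where the power
   function agrees with z |-> c0 + c1 z. *)
have dxy j : d 0 j = x%:C \/ d 0 j = y%:C.
  have : (diag_mx d - x%:C%:M) *m (diag_mx d - y%:C%:M) = 0.
    have conj z : diag_mx d - z%:M = P *m (H - z%:M) *m invmx P.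
      rewrite HE mulmxBr mulmxBl !mulmxA mulmxK // mulmxV // mul1mx.
      by rewrite mul_mx_scalar -scalemxAl mulmxV // scalemx1.
    rewrite !conj; move: HCH; move: (H - x%:C%:M) (H - y%:C%:M) => X Y XY0.
    by rewrite !mulmxA mulmxKV // -(mulmxA P) XY0 mulmx0 mul0mx.
  rewrite -!diag_const_mx -!linearB /= mulmx_diag => /matrixP/(_ j j).
  rewrite !mxE eqxx /= mulr1n => /eqP; rewrite mulf_eq0 !subr_eq0.
  by case/orP => /eqP; [left | right].
have -> : map_mx (fun z : C => ((complex.Re z) `^ t)%:C) d =
          c0%:C *: const_mx 1 + c1%:C *: d.
  apply/matrixP => i j; rewrite ord1 !mxE mulr1.
  by case: (dxy j) => ->; rewrite /= -?ex -?ey rmorphD rmorphM.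
rewrite linearD linearZ /= diag_const_mx scalemx1 mulmxDr mulmxDl mul_mx_scalar.
rewrite -scalemxAl mulVmx // scalemx1 linearZ /=.
by rewrite -scalemxAr -scalemxAl -HE.
Qed.

Definition mx2 (a b c d : R) : 'M[C]_2 :=
  \matrix_(i, j) (if i == 0 then if j == 0 then a else b
                  else if j == 0 then c else d)%:C.

Local Notation sym2 a b d := (mx2 a b b d).

Lemma mx2P (M : 'M[C]_2) a b c d :
  M 0 0 = a%:C -> M 0 1 = b%:C -> M 1 0 = c%:C -> M 1 1 = d%:C ->
  M = mx2 a b c d.
Proof.
move=> M00 M01 M10 M11; apply/matrixP => i j; rewrite mxE.
case: i => -[|[|//]] ?; case: j => -[|[|//]] ? /=;
  [rewrite -M00 | rewrite -M01 | rewrite -M10 | rewrite -M11];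
  by congr (M _ _); apply: val_inj.
Qed.

Lemma mx2_mul a b c d a' b' c' d' :
  mx2 a b c d *m mx2 a' b' c' d' =
  mx2 (a * a' + b * c') (a * b' + b * d') (c * a' + d * c') (c * b' + d * d').
Proof.
by apply: mx2P; rewrite mxE !big_ord_recl big_ord0 !mxE /= !rmorphD !rmorphM addr0.
Qed.

Lemma mx2_add a b c d a' b' c' d' :
  mx2 a b c d + mx2 a' b' c' d' = mx2 (a + a') (b + b') (c + c') (d + d').
Proof. by apply: mx2P; rewrite !mxE /= rmorphD. Qed.

Lemma mx2_sub a b c d a' b' c' d' :
  mx2 a b c d - mx2 a' b' c' d' = mx2 (a - a') (b - b') (c - c') (d - d').
Proof. by apply: mx2P; rewrite !mxE /= rmorphB. Qed.

Lemma mx2_scale k a b c d :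
  k%:C *: mx2 a b c d = mx2 (k * a) (k * b) (k * c) (k * d).
Proof. by apply: mx2P; rewrite !mxE /= rmorphM. Qed.

Lemma mx2_scalar k : k%:C%:M = mx2 k 0 0 k.
Proof. by apply: mx2P; rewrite !mxE. Qed.

Lemma mx2_zero : 0 = mx2 0 0 0 0.
Proof. by apply: mx2P; rewrite !mxE. Qed.

Lemma mx2_trace a b c d : \tr (mx2 a b c d) = (a + d)%:C.
Proof. by rewrite /mxtrace !big_ord_recl big_ord0 !mxE /= rmorphD addr0. Qed.

Lemma mx2_det a b c d : \det (mx2 a b c d) = (a * d - b * c)%:C.
Proof.
rewrite (expand_det_row _ 0) !big_ord_recl big_ord0 /cofactor !det_mx11 !mxE /=.
by rewrite rmorphB !rmorphM /=; ring.
Qed.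

Lemma sym2_herm a b d : sym2 a b d \is hermsymmx.
Proof.
apply/is_hermitianmxP; rewrite expr0 scale1r; apply/esym/mx2P; rewrite !mxE /=;
  exact: conjc_real.
Qed.

Definition sym2_eigen (a b d x y : R) := a + d = x + y /\ a * d - b ^+ 2 = x * y.

Lemma sym2_eigen_exists a b d : exists x y, sym2_eigen a b d x y.
Proof.
have disc_ge0 : 0 <= (a - d) ^+ 2 + 4 * b ^+ 2.
  by rewrite addr_ge0 ?sqr_ge0 // mulr_ge0 ?sqr_ge0.
set s := Num.sqrt ((a - d) ^+ 2 + 4 * b ^+ 2).
have ss : s ^+ 2 = (a - d) ^+ 2 + 4 * b ^+ 2 by rewrite sqr_sqrtr.
exists ((a + d + s) / 2), ((a + d - s) / 2); split; first by field.
have -> : (a + d + s) / 2 * ((a + d - s) / 2) = ((a + d) ^+ 2 - s ^+ 2) / 4 by field.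
by rewrite ss; field.
Qed.

Lemma sym2_eigen_affine a b d x y c0 c1 : sym2_eigen a b d x y ->
  sym2_eigen (c0 + c1 * a) (c1 * b) (c0 + c1 * d) (c0 + c1 * x) (c0 + c1 * y).
Proof.
move=> [tr det]; split; first by rewrite addrACA -mulrDr tr mulrDr addrACA.
have -> : (c0 + c1 * a) * (c0 + c1 * d) - (c1 * b) ^+ 2
        = c0 ^+ 2 + c0 * c1 * (a + d) + c1 ^+ 2 * (a * d - b ^+ 2) by ring.
by rewrite tr det; ring.
Qed.

Lemma sym2_annihilated a b d x y : sym2_eigen a b d x y ->
  (sym2 a b d - x%:C%:M) *m (sym2 a b d - y%:C%:M) = 0.
Proof.
move=> [tr det]; rewrite !mx2_scalar !mx2_sub mx2_mul mx2_zero.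
have -> : y = a + d - x by lra.
by congr mx2; nra.
Qed.

Lemma mpow_sym2 a b d x y t : sym2_eigen a b d x y ->
  exists c0 c1, [/\ c0 + c1 * x = x `^ t, c0 + c1 * y = y `^ t &
    mpow (sym2 a b d) t = sym2 (c0 + c1 * a) (c1 * b) (c0 + c1 * d)].
Proof.
move=> eig; have [c0 [c1 [ex ey]]] := exists_affine_interp (fun z => z `^ t) x y.
exists c0, c1; split => //.
rewrite (mpow_affine (sym2_herm _ _ _) (sym2_annihilated eig) ex ey).
by rewrite mx2_scalar mx2_scale mx2_add !add0r.
Qed.

Lemma mpow_sym2_eigen a b d x y t : sym2_eigen a b d x y ->
  exists a' b' d', mpow (sym2 a b d) t = sym2 a' b' d' /\
                   sym2_eigen a' b' d' (x `^ t) (y `^ t).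
Proof.
move=> eig; have [c0 [c1 [<- <- ->]]] := mpow_sym2 t eig.
by exists (c0 + c1 * a), (c1 * b), (c0 + c1 * d); split; last exact: sym2_eigen_affine.
Qed.

Lemma char_poly2_trace_det (F : comNzRingType) (M : 'M[F]_2) (x y : F) :
  char_poly M = ('X - x%:P) * ('X - y%:P) -> \tr M = x + y /\ \det M = x * y.
Proof.
have -> : ('X - x%:P) * ('X - y%:P) = 'X^2 - (x + y) *: 'X + (x * y)%:P :> {poly F}.
  by rewrite -!mul_polyC polyCD polyCM; ring.
move=> cpM; split.
  by apply: oppr_inj; rewrite -(char_poly_trace M isT) cpM !coefE /= sub0r addr0 mulr1.
by rewrite -[\det M]mul1r -(expr1n _ 2) -sqrrN -char_poly_det cpM !coefE /= mulr0 subr0 add0r.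
Qed.

Lemma eigvals_dec_sym2 a b d x y s : sym2_eigen a b d x y ->
  eigvals_dec (sym2 a b d) s -> s = [:: Num.max x y; Num.min x y].
Proof.
move=> [tr det] [size_s [sorted_s cp_s]].
case: s size_s sorted_s cp_s => [|s0 [|s1 []]] //= _ /andP[s10 _].
rewrite !big_cons big_nil mulr1 => /char_poly2_trace_det[].
rewrite mx2_trace mx2_det -rmorphD -rmorphM => /complexI sum /complexI prod.
have prod' : s0 * s1 = x * y by rewrite -prod -expr2 det.
by have [-> ->] := sorted_sum_prod_eq s10 (etrans (esym sum) tr) prod'.
Qed.

Lemma lambda_le_sym2 a b d x y a' b' d' x' y' :
  sym2_eigen a b d x y -> sym2_eigen a' b' d' x' y' ->
  lambda_le (sym2 a b d) (sym2 a' b' d') -> Num.min x y <= Num.min x' y'.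
Proof.
move=> eig eig' [s [s' [/(eigvals_dec_sym2 eig) -> [/(eigvals_dec_sym2 eig') -> le_s]]]].
exact: le_s 1%N isT.
Qed.

Lemma posdef_sym2 a b d : 0 < a -> 0 < a * d - b ^+ 2 -> posdef (sym2 a b d).
Proof.
move=> a_gt0 det_gt0; split; first exact: sym2_herm.
move=> v v_neq0; set x := v 0 0; set y := v 0 (lift 0 0).
have -> : (v *m sym2 a b d *m v ^t*) 0 0
    = (x * a%:C + y * b%:C) * x^* + (x * b%:C + y * d%:C) * y^*.
  by rewrite !mxE !big_ord_recl !big_ord0 !mxE !big_ord_recl !big_ord0 !mxE /= !addr0.
have aC_gt0 : 0 < a%:C by rewrite ltcR.
rewrite -(pmulr_rgt0 _ aC_gt0).
have -> : a%:C * ((x * a%:C + y * b%:C) * x^* + (x * b%:C + y * d%:C) * y^*)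
    = (a%:C * x + b%:C * y) * (a%:C * x + b%:C * y)^* + (a * d - b ^+ 2)%:C * (y * y^*).
  have conj_real z : z%:C^* = z%:C := conjc_real z.
  by rewrite !(rmorphD, rmorphN, rmorphM, rmorphXn) /= !conj_real; ring.
have [y0|y_neq0] := eqVneq y 0; last first.
  by rewrite ltr_wpDl ?mul_conjC_ge0 // mulr_gt0 ?ltcR // mul_conjC_gt0.
have x_neq0 : x != 0.
  apply: contraNneq v_neq0 => x0; apply/eqP/rowP => -[[|[|//]] j_lt]; rewrite mxE;
    [rewrite -x0 | rewrite -y0]; congr (v _ _); exact: val_inj.
by rewrite y0 !(mulr0, mul0r, addr0) mul_conjC_gt0 mulf_neq0 ?(gt_eqF aC_gt0).
Qed.

Lemma posdef_sym2_eigen a b d x y :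
  sym2_eigen a b d x y -> 0 < x -> 0 < y -> posdef (sym2 a b d).
Proof.
move=> [tr det] x_gt0 y_gt0; have xy_gt0 : 0 < x * y by rewrite mulr_gt0.
apply: posdef_sym2; last by rewrite det.
by rewrite -det in xy_gt0; nra.
Qed.

Lemma sym2_eigen_min_le a b d x y : sym2_eigen a b d x y -> Num.min x y <= d.
Proof.
move=> [tr det]; have y_eq : y = a + d - x by lra.
rewrite y_eq in det *; have prod_le0 : (x - d) * (a - x) <= 0.
  have -> : (x - d) * (a - x) = - b ^+ 2 by rewrite -[RHS](addKr (a * d)) det; ring.
  by rewrite oppr_le0 sqr_ge0.
by rewrite minEle; case: (leP x (a + d - x)) => xy; nra.
Qed.

Lemma sym2_sandwich e a b d :
  sym2 1 0 e *m sym2 a b d *m sym2 1 0 e = sym2 a (e * b) (e ^+ 2 * d).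
Proof. by rewrite !mx2_mul; congr mx2; ring. Qed.

(* Q + z (1 - Q) for Q = [[1 - s, m], [m, s]], which is a rank-one projection
   when m ^+ 2 = s - s ^+ 2. *)
Definition pencil (s m z : R) : 'M[C]_2 :=
  sym2 (1 - (1 - z) * s) ((1 - z) * m) (z + (1 - z) * s).

Lemma pencil_eigen s m z : m ^+ 2 = s - s ^+ 2 ->
  sym2_eigen (1 - (1 - z) * s) ((1 - z) * m) (z + (1 - z) * s) 1 z.
Proof. by move=> m_sq; split; [ring | rewrite exprMn m_sq; ring]. Qed.

Lemma posdef_pencil s m z : m ^+ 2 = s - s ^+ 2 -> 0 < z -> posdef (pencil s m z).
Proof. by move=> /(pencil_eigen z) eig; apply: posdef_sym2_eigen eig ltr01. Qed.

Lemma mpow_pencil s m z t : m ^+ 2 = s - s ^+ 2 ->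
  mpow (pencil s m z) t = pencil s m (z `^ t).
Proof.
move=> /(pencil_eigen z) /(mpow_sym2 t) [c0 [c1 [c_1 c_z ->]]].
rewrite powR1 in c_1; rewrite -c_z /pencil.
have -> : c0 = 1 - c1 by lra.
by congr mx2; ring.
Qed.

Lemma pencil0 z : pencil 0 0 z = sym2 1 0 z.
Proof. by rewrite /pencil; congr mx2; ring. Qed.

Lemma mpow_diag2 z t : mpow (sym2 1 0 z) t = sym2 1 0 (z `^ t).
Proof. by rewrite -!pencil0 mpow_pencil // expr0n subr0. Qed.

(* The constraint on s gives the middle factor eigenvalues 4 and 1/4. *)
Lemma wgmean_diag_pencil al δ s m :
  0 < δ -> m ^+ 2 = s - s ^+ 2 -> s * (1 - δ) ^+ 2 = 9 / 4 * δ ->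
  exists a b d, [/\ wgmean al (sym2 1 0 δ) (pencil s m δ) = sym2 a b d,
                    a + d = kappa al * (1 + δ) & a * d - b ^+ 2 = δ].
Proof.
move=> δ_gt0 m_sq s_eq; set e := δ `^ 2^-1.
have e_gt0 : 0 < e by rewrite powR_gt0.
have e_sq : e ^+ 2 = δ.
  by rewrite -powR_mulrn ?powR_ge0 // -powRrM mulVf ?powRr1 ?pnatr_eq0 // ltW.
rewrite /wgmean !mpow_diag2 powRN -/e /pencil sym2_sandwich.
set n0 := 1 - _; set n1 := e^-1 * _; set n2 := e^-1 ^+ 2 * _.
have [_ pencil_det] := pencil_eigen δ m_sq.
have eigN : sym2_eigen n0 n1 n2 4 4^-1.
  split.
  - rewrite /n0 /n2 exprVn e_sq; apply: (mulfI (lt0r_neq0 δ_gt0)).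
    by rewrite mulrDr mulrA mulfV ?lt0r_neq0 // mulrDr mul1r; lra.
  - have -> : n0 * n2 - n1 ^+ 2
              = e^-1 ^+ 2 * (n0 * (δ + (1 - δ) * s) - ((1 - δ) * m) ^+ 2).
      by rewrite /n1 /n2; ring.
    by rewrite pencil_det exprVn e_sq mul1r mulVf ?mulfV ?lt0r_neq0 ?pnatr_eq0.
have [c0 [c1 [c_4 c_4' ->]]] := mpow_sym2 al eigN.
have [_ det_aff] := sym2_eigen_affine c0 c1 eigN.
rewrite sym2_sandwich; eexists _, _, _; split; first reflexivity.
- have n02 : n0 + δ * n2 = 1 + δ.
    by rewrite /n2 mulrA exprVn e_sq mulfV ?lt0r_neq0 // mul1r /n0; ring.
  have c_sum : c0 + c1 = kappa al by rewrite /kappa -c_4 -c_4'; field.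
  have -> : c0 + c1 * n0 + e ^+ 2 * (c0 + c1 * n2)
          = c0 * (1 + δ) + c1 * (n0 + δ * n2).
    by rewrite e_sq; ring.
  by rewrite n02 -c_sum; ring.
- have -> : (c0 + c1 * n0) * (e ^+ 2 * (c0 + c1 * n2)) - (e * (c1 * n1)) ^+ 2
          = e ^+ 2 * ((c0 + c1 * n0) * (c0 + c1 * n2) - (c1 * n1) ^+ 2) by ring.
  rewrite det_aff c_4 c_4' -powRM ?invr_ge0 //.
  by rewrite mulfV ?powR1 ?mulr1 ?e_sq ?pnatr_eq0.
Qed.

Lemma Gmean_pencil_min_eigen_ge al p a δ s m :
  0 < p -> 0 < δ -> a `^ p = δ -> m ^+ 2 = s - s ^+ 2 -> s * (1 - δ) ^+ 2 = 9 / 4 * δ ->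
  exists a' b' d' x y, [/\ Gmean al p (sym2 1 0 a) (pencil s m a) = sym2 a' b' d',
    sym2_eigen a' b' d' x y & (δ / (kappa al * (1 + δ))) `^ p^-1 <= Num.min x y].
Proof.
move=> p_gt0 δ_gt0 a_p m_sq s_eq.
rewrite /Gmean mpow_diag2 mpow_pencil // a_p.
have [w0 [w1 [w2 [-> tr det]]]] := wgmean_diag_pencil al δ_gt0 m_sq s_eq.
have [x [y [sum prod]]] := sym2_eigen_exists w0 w1 w2.
have [a' [b' [d' [-> eig']]]] := mpow_sym2_eigen p^-1 (conj sum prod).
exists a', b', d', (x `^ p^-1), (y `^ p^-1); split => //.
have sum_gt0 : 0 < x + y by rewrite -sum tr mulr_gt0 ?kappa_gt0 ?addr_gt0.
have prod_gt0 : 0 < x * y by rewrite -prod det.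
have [x_gt0 y_gt0] : 0 < x /\ 0 < y by split; nra.
have p_inv_ge0 : 0 <= p^-1 by rewrite invr_ge0 ltW.
have lb : δ / (kappa al * (1 + δ)) <= Num.min x y.
  by rewrite -tr sum -det prod prod_div_sum_le_min.
have lb_nneg : δ / (kappa al * (1 + δ)) \in Num.nneg.
  by rewrite nnegrE ltW ?divr_gt0 // -tr sum.
have min_nneg : Num.min x y \in Num.nneg by rewrite nnegrE le_min !ltW.
by rewrite min_powR ?(ltW x_gt0) ?(ltW y_gt0) //; exact: ge0_ler_powR.
Qed.

Lemma Amean_pencil_min_eigen_le al q a s m :
  0 < al < 1 -> 0 < q -> 0 < a -> m ^+ 2 = s - s ^+ 2 ->
  exists a' b' d' x y, [/\ Amean al q (sym2 1 0 a) (pencil s m a) = sym2 a' b' d',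
    sym2_eigen a' b' d' x y & Num.min x y <= (a `^ q + s) `^ q^-1].
Proof.
move=> /andP[al_gt0 al_lt1] q_gt0 a_gt0 m_sq.
have [s_ge0 s_le1] : 0 <= s /\ s <= 1 by have := sqr_ge0 m; rewrite m_sq; split; nra.
rewrite /Amean mpow_diag2 mpow_pencil // /pencil !mx2_scale mx2_add.
set e := a `^ q; have e_gt0 : 0 < e by rewrite powR_gt0.
have [_ pencil_det] := pencil_eigen e m_sq.
set M0 := (1 - al) * 1 + _; set M1 := (1 - al) * 0 + _; set M2 := (1 - al) * e + _.
have [y1 [y2 [sum prod]]] := sym2_eigen_exists M0 M1 M2.
have [a' [b' [d' [-> eig']]]] := mpow_sym2_eigen q^-1 (conj sum prod).
exists a', b', d', (y1 `^ q^-1), (y2 `^ q^-1); split => //.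
have sum_gt0 : 0 < y1 + y2 by rewrite -sum /M0 /M2; nra.
have prod_ge0 : 0 <= y1 * y2.
  have -> : y1 * y2 = (1 - al) ^+ 2 * e + al * (1 - al) * (2 * e + (1 - e) ^+ 2 * s)
      + al ^+ 2 * ((1 - (1 - e) * s) * (e + (1 - e) * s) - ((1 - e) * m) ^+ 2).
    by rewrite -prod /M0 /M1 /M2; ring.
  have al_1 : 0 <= al * (1 - al) by nra.
  have cross : 0 <= 2 * e + (1 - e) ^+ 2 * s.
    by have := mulr_ge0 (sqr_ge0 (1 - e)) s_ge0; lra.
  rewrite pencil_det mul1r; apply: addr_ge0; first apply: addr_ge0.
  - by rewrite mulr_ge0 ?sqr_ge0 ?ltW.
  - by rewrite mulr_ge0.
  - by rewrite mulr_ge0 ?sqr_ge0 ?ltW.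
have [y1_ge0 y2_ge0] : 0 <= y1 /\ 0 <= y2 by split; nra.
have min_le : Num.min y1 y2 <= e + s.
  apply: le_trans (sym2_eigen_min_le (conj sum prod)) _.
  have : 0 <= s * (1 - al + al * e) by rewrite mulr_ge0 //; nra.
  by rewrite /M2; lra.
have min_nneg : Num.min y1 y2 \in Num.nneg by rewrite nnegrE le_min y1_ge0 y2_ge0.
have es_nneg : e + s \in Num.nneg by rewrite nnegrE addr_ge0 // ltW.
have q_inv_ge0 : 0 <= q^-1 by rewrite invr_ge0 ltW.
by rewrite min_powR //; exact: ge0_ler_powR.
Qed.

End TwoByTwo.

Theorem theorem4p20 (R : realType) (alpha p q : R) :
  0 < alpha < 1 -> 0 < p -> 0 < q ->
  (forall A B : 'M[R[i]]_2, posdef A -> posdef B ->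
     lambda_le (Gmean alpha p A B) (Amean alpha q A B)) ->
  p <= q.
Proof.
move=> alpha_01 p_gt0 q_gt0 le_GA; rewrite leNgt; apply/negP => q_lt_p.
have [δ [/andP[δ_gt0 δ_lt1] /andP[s_ge0 s_le1] gap]] :=
  exists_separating_delta q_gt0 q_lt_p (kappa_gt0 alpha) (kappa_lt1 alpha_01).
set s := 9 / 4 * δ / (1 - δ) ^+ 2 in s_ge0 s_le1 gap.
have s_eq : s * (1 - δ) ^+ 2 = 9 / 4 * δ.
  by rewrite /s mulrAC -mulrA mulfV ?mulr1 // sqrf_eq0 subr_eq0 gt_eqF.
set m := Num.sqrt (s - s ^+ 2).
have m_sq : m ^+ 2 = s - s ^+ 2 by rewrite sqr_sqrtr // subr_ge0 expr2; nra.
set a := δ `^ p^-1; have a_gt0 : 0 < a by rewrite powR_gt0.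
have a_p : a `^ p = δ by rewrite -powRrM mulVf ?powRr1 ?ltW ?gt_eqF.
have a_q : a `^ q = δ `^ (q / p) by rewrite -powRrM mulrC.
have [aG [bG [dG [xG [yG [GE eigG lbG]]]]]] :=
  Gmean_pencil_min_eigen_ge alpha p_gt0 δ_gt0 a_p m_sq s_eq.
have [aA [bA [dA [xA [yA [AE eigA ubA]]]]]] :=
  Amean_pencil_min_eigen_le alpha_01 q_gt0 a_gt0 m_sq.
have posA : posdef (mx2 1 0 0 a).
  by rewrite -pencil0; apply: posdef_pencil; rewrite ?expr0n ?subr0.
have posB := posdef_pencil m_sq a_gt0.
have := le_GA _ _ posA posB; rewrite GE AE => /(lambda_le_sym2 eigG eigA) le_min.
have := lt_le_trans gap (le_trans lbG (le_trans le_min ubA)).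
by rewrite a_q ltxx.
Qed.
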